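(* For each integer $\lambda$, there are at most finitely many independent Stanley sequences (in root position) with character $\lambda$.
   Context: A set of non-negative integers is 3-free if no three of its elements form an arithmetic progression. For a finite 3-free set $A=\{a_0<\cdots<a_k\}$ of non-negative integers, the Stanley sequence $S(A)=(a_n)_{n\ge0}$ is the increasing sequence with initial terms $a_0,\ldots,a_k$ in which each subsequent $a_{n+1}$ is the smallest integer greater than $a_n$ such that $\{a_0,\ldots,a_{n+1}\}$ is 3-free. Throughout, Stanley sequences are in root position, i.e. $a_0=0$. A Stanley sequence $(a_n)$ is independent with character $\lambda$ if for all sufficiently large $k$: $a_{2^k+i}=a_{2^k}+a_i$ for $0\le i<2^k$, and $a_{2^k}=2a_{2^k-1}-\lambda+1$. *)

From mathcomp Require Import all_boot all_order all_algebra.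
Set Implicit Arguments. Unset Strict Implicit. Unset Printing Implicit Defensive.
Import GRing.Theory Num.Theory.

Definition threefree (A : seq nat) : Prop :=
  forall x y z, x \in A -> y \in A -> z \in A -> x < y -> y < z -> x + z <> 2 * y.

Definition prefix (a : nat -> nat) (n : nat) : seq nat := [seq a i | i <- iota 0 n.+1].

(* a is the Stanley sequence S(A) (in root position, a_0 = 0) for the finite
   3-free set A = {a_0 < ... < a_k}, for some k: a is increasing, the initial
   segment {a_0..a_k} is 3-free, and for n >= k, a_{n+1} is the smallest
   integer > a_n such that {a_0,...,a_{n+1}} is 3-free. *)
Definition stanley (a : nat -> nat) : Prop :=
  a 0 = 0 /\ (forall n, a n < a n.+1) /\
  exists k, threefree (prefix a k) /\
    forall n, k <= n ->
      threefree (prefix a n.+1) /\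
      (forall m, a n < m -> m < a n.+1 -> ~ threefree (rcons (prefix a n) m)).

Definition independent (a : nat -> nat) (lam : int) : Prop :=
  exists K, forall k, K <= k ->
    (forall i, i < 2 ^ k -> a (2 ^ k + i) = a (2 ^ k) + a i) /\
    ((a (2 ^ k)%N)%:Z = 2 * (a (2 ^ k - 1)%N)%:Z - lam + 1)%R.

From Pilot Require Import Defs.
From mathcomp Require Import all_boot all_order all_algebra.
From mathcomp Require Import zify.
From Stdlib Require Import Classical ClassicalEpsilon.

(* An independent Stanley sequence with character lam is determined by its
   terms below lam: every c >= lam belongs to it exactly when c does not
   complete a 3-term progression with mem_prefix_lter terms.  Indeed, if c >= lam is
   not a term, pick a_i < c < a_(i+1) and a large N = 2^k; then a_N + c lies
   strictly between the consecutive terms a_(N+i) = a_N + a_i and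
   a_(N+i+1) = a_N + a_(i+1), so by greediness it completes a progression
   a_p, a_q, a_N + c.  The relation a_N = 2 a_(N-1) - lam + 1 forces p, q >= N,
   and subtracting a_N from both terms shows that c itself is completed by
   a_(p-N), a_(q-N).  Hence there are at most 2^|lam| such sequences. *)

Set Implicit Arguments.
Unset Strict Implicit.
Unset Printing Implicit Defensive.

Section IncreasingSequence.

Variable a : nat -> nat.
Hypothesis a_incr : forall n, a n < a n.+1.

Lemma incr_leq_mono : {mono a : m n / m <= n}.
Proof. exact/leq_mono/(homo_ltn ltn_trans). Qed.

Lemma incr_ltn_mono : {mono a : m n / m < n}.
Proof. exact/leqW_mono/incr_leq_mono. Qed.

Lemma incr_geq_id n : n <= a n.
Proof. by elim: n => // n IHn; apply: leq_ltn_trans IHn (a_incr n). Qed.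

Lemma incr_bracket c M : a 0 < c < a M -> (forall n, a n != c) ->
  exists2 i, i < M & a i < c < a i.+1.
Proof.
elim: M => [|M IHM] /andP [c_gt0 c_lt] a_neq_c.
  by move: (ltn_trans c_gt0 c_lt); rewrite ltnn.
have [c_ltM | c_geM] := ltnP c (a M).
  have [|i i_lt_M ?] := IHM _ a_neq_c; first by rewrite c_gt0 c_ltM.
  by exists i => //; apply: ltnW.
by exists M; rewrite // c_lt andbT ltn_neqAle a_neq_c.
Qed.

End IncreasingSequence.

Definition in_range (a : nat -> nat) (c : nat) : Prop := exists n, a n = c.

Definition covered (a : nat -> nat) (c : nat) : Prop :=
  exists x y, [/\ x < y < c, in_range a x, in_range a y & x + c = 2 * y].

Section Stanley.

Variable a : nat -> nat.
Hypothesis a_stanley : stanley a.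

Lemma stanley_incr n : a n < a n.+1.
Proof. by case: a_stanley => _ []. Qed.

Lemma stanley_3free p q r : p < q < r -> a p + a r <> 2 * a q.
Proof.
case: a_stanley => _ [_ [k [_ a_greedy]]] /andP [p_lt_q q_lt_r].
have [prefix_3free _] := a_greedy (maxn k r) (leq_maxl _ _).
have mem_prefix n : n <= r -> a n \in Defs.prefix a (maxn k r).+1.
  by move=> n_le_r; apply: map_f; rewrite mem_iota ltnS leqW // leq_max n_le_r orbT.
by apply: prefix_3free; rewrite ?mem_prefix ?incr_ltn_mono //; [
  exact/ltnW/(ltn_trans p_lt_q) | exact/ltnW | exact: stanley_incr..].
Qed.

Lemma covered_not_in_range c : covered a c -> ~ in_range a c.
Proof.
move=> [x [y [/andP [x_lt_y y_lt_c] [p a_p] [q a_q] apq]]] [r r_c]; subst x y.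
rewrite -r_c in y_lt_c apq.
rewrite !incr_ltn_mono in x_lt_y y_lt_c; try exact: stanley_incr.
by apply: (stanley_3free (p := p) (q := q) (r := r)); rewrite ?x_lt_y.
Qed.

Lemma stanley_gap_covered : exists k, forall n m, k <= n -> a n < m < a n.+1 ->
  exists p q, [/\ p < q, q <= n & a p + m = 2 * a q].
Proof.
case: a_stanley => _ [_ [k [_ a_greedy]]]; exists k => n m k_le_n /andP [m_gt m_lt].
apply: NNPP => not_covered.
have [_ m_not_3free] := a_greedy n k_le_n.
apply: (m_not_3free m m_gt m_lt) => x y z.
have mem_prefix_lt w : w \in Defs.prefix a n -> exists2 p, p <= n & a p = w /\ w < m.
  case/mapP=> p; rewrite mem_iota ltnS => p_le_n ->; exists p => //.
  by split=> //; apply: leq_ltn_trans m_gt; rewrite incr_leq_mono //; exact: stanley_incr.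
have mem_rcons_lt w : w \in rcons (Defs.prefix a n) m -> w < m -> w \in Defs.prefix a n.
  by rewrite mem_rcons in_cons => /orP [/eqP ->|]; rewrite ?ltnn.
move=> x_in y_in z_in x_lt_y y_lt_z.
have z_le_m : z <= m.
  by move: z_in; rewrite mem_rcons in_cons => /orP [/eqP -> //|/mem_prefix_lt [? _ []] _ /ltnW].
have [p p_le [x_eq _]] := mem_prefix_lt _ (mem_rcons_lt _ x_in (ltn_trans x_lt_y (leq_trans y_lt_z z_le_m))).
have [q q_le [y_eq _]] := mem_prefix_lt _ (mem_rcons_lt _ y_in (leq_trans y_lt_z z_le_m)).
subst x y; rewrite incr_ltn_mono in x_lt_y; last exact: stanley_incr.
move: z_in y_lt_z; rewrite mem_rcons in_cons => /orP [/eqP -> _ apq|].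
  by apply: not_covered; exists p, q.
case/mem_prefix_lt=> r _ [<- _]; rewrite incr_ltn_mono; last exact: stanley_incr.
by move=> q_lt_r; apply: stanley_3free; rewrite x_lt_y.
Qed.

End Stanley.

Section Independent.

Variables (a : nat -> nat) (lam : int).
Hypotheses (a_stanley : stanley a) (a_indep : independent a lam).

Lemma independent_not_in_range_covered c :
  (lam <= c%:Z)%R -> ~ in_range a c -> covered a c.
Proof.
move=> lam_le_c c_notin.
have a_incr := stanley_incr a_stanley.
have a0 : a 0 = 0 by case: a_stanley.
have [K a_split] := a_indep; have [k0 a_gap] := stanley_gap_covered a_stanley.
pose k := K + k0 + c + `|lam|%N + 1; pose N := 2 ^ k.
have k_lt_N : k < N by apply: ltn_expl.
have K_le_k : K <= k by rewrite /k; lia.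
have [a_shift a_char] := a_split k K_le_k; rewrite -/N in a_shift a_char.
have a_big : c + `|lam|%N < a (N - 1).
  by apply: leq_trans (incr_geq_id a_incr _); rewrite /k in k_lt_N; lia.
have [i i_lt /andP [ai_lt_c c_lt_ai1]] : exists2 i, i < N - 1 & a i < c < a i.+1.
  apply: incr_bracket => // [|n]; last by apply/eqP => a_n; apply: c_notin; exists n.
  rewrite (leq_ltn_trans _ a_big) ?leq_addr // andbT a0 lt0n.
  by apply/eqP => c0; apply: c_notin; exists 0; rewrite a0 c0.
have a_Ni : a (N + i) = a N + a i by apply: a_shift; lia.
have a_Ni1 : a (N + i).+1 = a N + a i.+1 by rewrite -addnS a_shift //; lia.
have [p [q [p_lt_q q_le apq]]] : exists p q, [/\ p < q, q <= N + i & a p + (c + a N) = 2 * a q].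
  by apply: a_gap; [rewrite /k in k_lt_N; lia | rewrite a_Ni a_Ni1; lia].
have a_le_last n : n < N -> a n <= a (N - 1) by move=> n_lt; rewrite incr_leq_mono //; lia.
(* The character relation makes a_N too large for a_q with q < N, and also for
   a_p with p < N once a_q >= a_N. *)
have N_le_q : N <= q.
  by rewrite leqNgt; apply/negP => /a_le_last; lia.
have a_N_le_q : a N <= a q by rewrite incr_leq_mono.
have N_le_p : N <= p.
  by rewrite leqNgt; apply/negP => /a_le_last; lia.
have [p' p_eq] : exists p', p = N + p' by exists (p - N); lia.
have [q' q_eq] : exists q', q = N + q' by exists (q - N); lia.
subst p q; rewrite !a_shift in apq; try lia.
have a_q'_lt_c : a q' < c by apply: leq_ltn_trans ai_lt_c; rewrite incr_leq_mono //; lia.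
exists (a p'), (a q'); split; [|by exists p'|by exists q'|lia].
by rewrite a_q'_lt_c andbT incr_ltn_mono //; lia.
Qed.

Lemma independent_in_rangeE c :
  (lam <= c%:Z)%R -> in_range a c <-> ~ covered a c.
Proof.
move=> lam_le_c; split; first by move=> c_in /(covered_not_in_range a_stanley).
by move=> c_uncovered; apply: NNPP => /(independent_not_in_range_covered lam_le_c).
Qed.

End Independent.

Lemma incr_eq_of_range a b : (forall n, a n < a n.+1) -> (forall n, b n < b n.+1) ->
  (forall c, in_range a c <-> in_range b c) -> a =1 b.
Proof.
move=> a_incr b_incr same_range n; elim/ltn_ind: n => n IHn.
have [p bn_eq] : in_range a (b n) by apply/same_range; exists n.
have [q an_eq] : in_range b (a n) by apply/same_range; exists n.
have n_le_p : n <= p.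
  rewrite leqNgt; apply/negP => p_lt_n.
  by move: (p_lt_n); rewrite -(incr_ltn_mono b_incr) -bn_eq IHn // ltnn.
have n_le_q : n <= q.
  rewrite leqNgt; apply/negP => q_lt_n.
  by move: (q_lt_n); rewrite -(incr_ltn_mono a_incr) -an_eq -IHn // ltnn.
rewrite -(incr_leq_mono a_incr) bn_eq in n_le_p.
rewrite -(incr_leq_mono b_incr) an_eq in n_le_q.
by apply/eqP; rewrite eqn_leq n_le_p n_le_q.
Qed.

Lemma independent_eq_of_low_range a b lam :
  stanley a -> independent a lam -> stanley b -> independent b lam ->
  (forall c, (c%:Z < lam)%R -> in_range a c <-> in_range b c) -> a =1 b.
Proof.
move=> a_stanley a_indep b_stanley b_indep same_low.
apply: incr_eq_of_range; try exact: stanley_incr.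
move=> c; elim/ltn_ind: c => c IHc.
have [c_lt_lam|lam_le_c] : (c%:Z < lam \/ lam <= c%:Z)%R by lia.
  exact: same_low.
rewrite (independent_in_rangeE a_stanley a_indep lam_le_c).
rewrite (independent_in_rangeE b_stanley b_indep lam_le_c).
suff: covered a c <-> covered b c by tauto.
by split=> -[x [y [/andP [x_lt_y y_lt_c] x_in y_in xy_c]]]; exists x, y;
  rewrite x_lt_y y_lt_c; split=> //; apply/IHc => //; exact: ltn_trans y_lt_c.
Qed.

(* Since a_n >= n, the index of a term c can be searched below c + 1. *)
Definition low_range (lam : int) (a : nat -> nat) : {set 'I_`|lam|} :=
  [set i : 'I_`|lam| | has (fun n => a n == i) (iota 0 i.+1)].

Lemma mem_low_range lam a (i : 'I_`|lam|) : (forall n, a n < a n.+1) ->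
  i \in low_range lam a <-> in_range a i.
Proof.
move=> a_incr; rewrite inE; split; first by case/hasP => n _ /eqP; exists n.
case=> n a_n; apply/hasP; exists n; last exact/eqP.
by rewrite mem_iota ltnS -a_n incr_geq_id.
Qed.

Lemma independent_low_range_inj a b lam :
  stanley a -> independent a lam -> stanley b -> independent b lam ->
  low_range lam a = low_range lam b -> a =1 b.
Proof.
move=> a_stanley a_indep b_stanley b_indep same_low.
apply: (independent_eq_of_low_range a_stanley a_indep b_stanley b_indep) => c c_lt_lam.
have c_lt : c < `|lam| by lia.
have := mem_low_range (Ordinal c_lt) (stanley_incr a_stanley).
have := mem_low_range (Ordinal c_lt) (stanley_incr b_stanley).
by rewrite same_low /=; tauto.
Qed.

Lemma finite_classification (X : Type) (T : finType) (x0 : X)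
    (P : X -> Prop) (E : X -> X -> Prop) (f : X -> T) :
  (forall x y, P x -> P y -> f x = f y -> E x y) ->
  exists L : seq X, forall x, P x -> exists2 i, i < size L & E x (nth x0 L i).
Proof.
move=> f_classifies.
pose rep t := epsilon (inhabits x0) (fun y => P y /\ f y = t).
exists [seq rep t | t <- enum T] => x Px.
exists (index (f x) (enum T)); first by rewrite size_map index_mem mem_enum.
rewrite (nth_map (f x)) ?index_mem ?mem_enum // nth_index ?mem_enum //.
have [Prep frep] : P (rep (f x)) /\ f (rep (f x)) = f x.
  exact: (epsilon_spec (inhabits x0) (fun y => P y /\ f y = f x) (ex_intro _ x (conj Px erefl))).
exact: f_classifies Px Prep (esym frep).
Qed.

Theorem mainTheorem12 (lam : int) :
  exists L : seq (nat -> nat),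
    forall a : nat -> nat, stanley a -> independent a lam ->
      exists2 i, i < size L & (forall n, a n = nth (fun _ => 0) L i n).
Proof.
have low_range_classifies a b :
    stanley a /\ independent a lam -> stanley b /\ independent b lam ->
    low_range lam a = low_range lam b -> a =1 b.
  by move=> [a_stanley a_indep] [b_stanley b_indep]; exact: independent_low_range_inj.
have [L L_covers] := finite_classification (fun _ => 0) low_range_classifies.
by exists L => a a_stanley a_indep; apply: L_covers.
Qed.
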